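(* Let $\mathcal{A}=(Q,\delta,s)$ be an NFA satisfying the standing assumptions below, and run the Ordered Partition Refinement algorithm described below on $\mathcal{A}$. At the beginning of every iteration of its while loop, every part of the ordered partition $\mathcal{P}$ is forward-stable with respect to every part of $\mathcal{X}$.
   Context: $\Sigma=\{a_1<\dots<a_k\}$ is a finite totally ordered alphabet. NFA $\mathcal{A}=(Q,\delta,s)$, $\delta:Q\times\Sigma\to2^Q$, $\delta_a(u)=\delta(u,a)$, $\delta_a(T)=\bigcup_{u\in T}\delta_a(u)$. Standing assumptions: $s$ has no incoming transitions, every state is reachable from $s$, every $v\neq s$ has incoming transitions labeled by exactly one letter $\lambda(v)$, and every letter labels some transition. A set $S\subseteq Q$ is forward-stable with respect to $T\subseteq Q$ if for every $a\in\Sigma$, $S\subseteq\delta_a(T)$ or $S\cap\delta_a(T)=\emptyset$. Algorithm (Ordered Partition Refinement): let $Q_\epsilon=\{s\}$ and $Q_a=\{v:\lambda(v)=a\}$. Initialize the ordered partitions $\mathcal{P}:=\langle Q_\epsilon,Q_{a_1},\dots,Q_{a_k}\rangle$ and $\mathcal{X}:=\langle Q\rangle$. While $\mathcal{X}\neq\mathcal{P}$: let $S$ be the first part of $\mathcal{X}$ that is a union of at least two parts of $\mathcal{P}$; let $B$ be the smaller (in cardinality) of the first and the last part of $\mathcal{P}$ contained in $S$; replace $S$ in $\mathcal{X}$ by $B,S\setminus B$ if $B$ was the first such part, otherwise by $S\setminus B,B$. Then for each part $D$ of $\mathcal{P}$ (those present before this splitting step), with $a=\lambda(D)$ (the common label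 of its states; for the part $\{s\}$ take $D_1=\emptyset$): $D_1:=D\cap\delta_a(B)$, $D_2:=D\setminus D_1$, $D_{11}:=D_1\cap\delta_a(S\setminus B)$, $D_{12}:=D_1\setminus D_{11}$; replace $D$ in $\mathcal{P}$ by the nonempty sets among $D_{12},D_{11},D_2$ in this order if $B$ was the first part, and among $D_2,D_{11},D_{12}$ in this order otherwise. Return $\mathcal{P}$. *)

From mathcomp Require Import all_boot.
Set Implicit Arguments. Unset Strict Implicit. Unset Printing Implicit Defensive.

Section NFA.
Variables (Q : finType) (k : nat).
(* Alphabet Sigma = 'I_k, ordered by the natural order a_1 < ... < a_k. *)
Variable delta : Q -> 'I_k -> {set Q}.

Definition delta_set (T : {set Q}) (a : 'I_k) : {set Q} :=
  \bigcup_(u in T) delta u a.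

Definition trans_rel : rel Q := fun u v => [exists a, v \in delta u a].

(* lambda(v): the (unique, under the standing assumptions) label of the
   incoming transitions of v; None if v has no incoming transition (v = s). *)
Definition lam (v : Q) : option 'I_k :=
  [pick a | [exists u, v \in delta u a]].

Definition forward_stable (S T : {set Q}) : Prop :=
  forall a : 'I_k, S \subset delta_set T a \/ S :&: delta_set T a = set0.

Definition in_img (T : {set Q}) (v : Q) : bool :=
  if lam v is Some a then v \in delta_set T a else false.

Definition parts_in (P : seq {set Q}) (S : {set Q}) : seq {set Q} :=
  filter (fun D : {set Q} => D \subset S) P.

(* State of the algorithm: (P, X), both ordered partitions (sequences of sets). *)
Definition opr_init (s : Q) : seq {set Q} * seq {set Q} :=
  ([:: [set s] & [seq [set v | lam v == Some a] | a <- enum 'I_k]],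
   [:: [set: Q]]).

Definition opr_step (st : seq {set Q} * seq {set Q}) : seq {set Q} * seq {set Q} :=
  let P := st.1 in let X := st.2 in
  let i := find (fun S => 1 < size (parts_in P S)) X in
  if i < size X then
    let S := nth set0 X i in
    let ps := parts_in P S in
    let F := head set0 ps in
    let L := last set0 ps in
    let bfirst := #|F| <= #|L| in
    let B := if bfirst then F else L in
    let X' := take i X ++ (if bfirst then [:: B; S :\: B] else [:: S :\: B; B])
              ++ drop i.+1 X in
    let refine (D : {set Q}) :=
      let D1 := [set v in D | in_img B v] in
      let D2 := D :\: D1 in
      let D11 := [set v in D1 | in_img (S :\: B) v] in
      let D12 := D1 :\: D11 in
      filter (fun E : {set Q} => E != set0) (if bfirst then [:: D12; D11; D2] else [:: D2; D11; D12]) in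
    (flatten (map refine P), X')
  else st.

(* State at the beginning of the (n+1)-th loop iteration (or the final state
   if the loop has terminated earlier). *)
Definition opr_state (s : Q) (n : nat) : seq {set Q} * seq {set Q} :=
  iter n (fun st => if st.2 == st.1 then st else opr_step st) (opr_init s).

End NFA.

(* Invariant: every part D of P is homogeneous, i.e. its states share their
   label and, for every part T of X, either all or none of them have a
   predecessor in T.  A refinement step splits D by "has a predecessor in B"
   and "has a predecessor in S \ B"; on states without predecessor in B the
   second test coincides with "has a predecessor in S", on which D was already
   homogeneous.  As a state of delta_a(T) carries the label a, homogeneity of D
   with respect to T is forward stability. *)

From mathcomp Require Import all_boot.

Set Implicit Arguments. Unset Strict Implicit. Unset Printing Implicit Defensive.

Section Refinement.
Variables (Q : finType) (k : nat) (delta : Q -> 'I_k -> {set Q}).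

Local Notation lam := (lam delta).
Local Notation in_img := (in_img delta).
Local Notation delta_set := (delta_set delta).

Definition homogeneous (X : seq {set Q}) (D : {set Q}) : Prop :=
  {in D &, forall u v,
     lam u = lam v /\ {in X, forall T, in_img T u = in_img T v}}.

Definition homogeneous_state (st : seq {set Q} * seq {set Q}) : Prop :=
  {in st.1, forall D, homogeneous st.2 D}.

Lemma in_img_setD S B v :
  ~~ in_img B v -> in_img (S :\: B) v = in_img S v.
Proof.
rewrite /in_img; case: (lam v) => // a vNB.
apply/bigcupP/bigcupP => [[u]|[u uS vu]].
  by rewrite inE => /andP[_ uS] vu; exists u.
exists u => //; rewrite inE uS andbT.
by apply: contra vNB => uB; apply/bigcupP; exists u.
Qed.

Lemma homogeneous_cons (T : {set Q}) (X : seq {set Q}) (D : {set Q}) :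
  {in D &, forall u v, in_img T u = in_img T v} ->
  homogeneous X D -> homogeneous (T :: X) D.
Proof.
move=> hT hX u v uD vD; have [lam_uv img_uv] := hX u v uD vD.
by split=> // T'; rewrite inE => /predU1P[->|]; [exact: hT | exact: img_uv].
Qed.

Lemma homogeneous_sub (X X' : seq {set Q}) (D D' : {set Q}) :
  D' \subset D -> {subset X' <= X} -> homogeneous X D -> homogeneous X' D'.
Proof.
move=> /subsetP sD sX hX u v uD vD.
have [lam_uv img_uv] := hX u v (sD u uD) (sD v vD).
by split=> // T /sX; exact: img_uv.
Qed.

Definition split_part (S B D : {set Q}) : seq {set Q} :=
  let D1 := [set v in D | in_img B v] in
  let D11 := [set v in D1 | in_img (S :\: B) v] in
  [:: D1 :\: D11; D11; D :\: D1].

Lemma homogeneous_split_part X S B D E :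
  S \in X -> homogeneous X D -> E \in split_part S B D ->
  homogeneous (B :: S :\: B :: X) E.
Proof.
move=> SX hD.
have homogeneous_piece (E' : {set Q}) : E' \subset D ->
    {in E' &, forall u v, in_img B u = in_img B v} ->
    {in E' &, forall u v, in_img (S :\: B) u = in_img (S :\: B) v} ->
    homogeneous (B :: S :\: B :: X) E'.
  move=> sE hB hSB; do 2 apply: homogeneous_cons => //.
  exact: homogeneous_sub hD.
rewrite !inE => /or3P[] /eqP-> {E}; apply: homogeneous_piece => [|u v|u v];
  try (apply/subsetP => w); rewrite !inE.
- by case/and3P.
- by case/and3P=> _ _ -> /and3P[_ _ ->].
- case/and3P=> uND uD uB /and3P[vND vD vB].
  by move: uND vND; rewrite uD uB vD vB /= => /negPf-> /negPf->.
- by case/andP=> /andP[].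
- by case/andP=> /andP[_ ->] _ /andP[/andP[_ ->] _].
- by case/andP=> _ -> /andP[_ ->].
- by case/andP.
- case/andP=> uNB uD /andP[vNB vD].
  by move: uNB vNB; rewrite uD vD /= => /negPf-> /negPf->.
- case/andP=> uNB uD /andP[vNB vD]; move: uNB vNB; rewrite uD vD /= => uNB vNB.
  by rewrite !in_img_setD //; have [_ ->] := hD u v uD vD.
Qed.

Lemma homogeneous_opr_step st :
  homogeneous_state st -> homogeneous_state (opr_step delta st).
Proof.
case: st => P X hP; rewrite /opr_step /=; case: ifP => // iX.
set S := nth _ X _; set bf := _ <= _; set B := if bf then _ else _.
have SX : S \in X by exact: mem_nth.
move=> E /flattenP[_ /mapP[D DP ->]]; rewrite mem_filter => /andP[_ Eparts].
have Esplit : E \in split_part S B D.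
  by case: (bf) Eparts; rewrite !inE => /or3P[]/eqP->; rewrite eqxx ?orbT.
apply: homogeneous_sub (homogeneous_split_part SX (hP D DP) Esplit) => // T.
rewrite !mem_cat => /or3P[/mem_take | | /mem_drop] TX; rewrite ?inE ?TX ?orbT //.
by case: (bf) TX; rewrite !inE => /orP[]->; rewrite ?orbT.
Qed.

Lemma homogeneous_opr_init s : homogeneous_state (opr_init delta s).
Proof.
move=> D; rewrite inE => /predU1P[->|/mapP[a _ ->]] u v.
  by rewrite !inE => /eqP-> /eqP->.
rewrite !inE => /eqP lam_u /eqP lam_v; split; first by rewrite lam_u lam_v.
move=> T; rewrite inE => /eqP->; rewrite /in_img lam_u lam_v.
have in_full w : lam w = Some a -> w \in delta_set [set: Q] a.
  rewrite /lam; case: pickP => // b /existsP[x wx] [<-].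
  by apply/bigcupP; exists x; rewrite ?inE.
by rewrite !in_full.
Qed.

Lemma homogeneous_opr_state s n : homogeneous_state (opr_state delta s n).
Proof.
elim: n => [|n IHn] /=; first exact: homogeneous_opr_init.
by case: ifP => // _; apply: homogeneous_opr_step.
Qed.

Section UniqueLabels.
Hypothesis label_unique :
  forall u w v a b, v \in delta u a -> v \in delta w b -> a = b.

Lemma lam_delta_set T a v : v \in delta_set T a -> lam v = Some a.
Proof.
case/bigcupP => u _ vu; rewrite /lam; case: pickP => [b /existsP[w vw]|].
  by rewrite (label_unique vw vu).
by move/(_ a)/existsP; case; exists u.
Qed.

Lemma homogeneous_forward_stable X D T :
  T \in X -> homogeneous X D -> forward_stable delta D T.
Proof.
move=> TX hD a; have [|[v /setIP[vD vT]]] := set_0Vmem (D :&: delta_set T a).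
  by right.
left; apply/subsetP => w wD; have [lam_wv img_wv] := hD w v wD vD.
by have := img_wv T TX; rewrite /in_img lam_wv (lam_delta_set vT) vT.
Qed.

End UniqueLabels.

End Refinement.

Theorem lemma10 (Q : finType) (k : nat) (delta : Q -> 'I_k -> {set Q}) (s : Q)
  (Hs : forall (u : Q) (a : 'I_k), s \notin delta u a)
  (Hreach : forall v : Q, connect (trans_rel delta) s v)
  (Hlab : forall v : Q, v != s -> exists! a : 'I_k, exists u : Q, v \in delta u a)
  (Hletter : forall a : 'I_k, exists u v : Q, v \in delta u a)
  (n : nat) :
  let st := opr_state delta s n in
  st.2 != st.1 ->
  forall D T : {set Q}, D \in st.1 -> T \in st.2 -> forward_stable delta D T.
Proof.
move=> st _ D T DP TX.
have label_unique u w v a b : v \in delta u a -> v \in delta w b -> a = b.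
  move=> vu vw; have vNs : v != s by apply: contraTneq vu => ->.
  have [c [_ c_uniq]] := Hlab v vNs.
  by rewrite -(c_uniq a) ?(c_uniq b) //; [exists w | exists u].
apply: homogeneous_forward_stable label_unique _ _ _ TX _.
exact: homogeneous_opr_state DP.
Qed.
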